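(* Let $X$ be a quasi-tree with basepoint $x_0$, and let $(T_X,d^* )$ be its end-approximating tree with basepoint $[x_0]$. For every $a>1$ there exists a visual metric $d_{\partial X}$ on $\partial X$ with visual parameter $a$ such that $(\partial X,d_{\partial X})$ is isometric to $(\partial T_X,d_{\partial T_X})$, where $d_{\partial T_X}(p,q)=a^{-(p,q)_{[x_0]}}$ is the standard visual metric on $\partial T_X$ with parameter $a$.
   Context: A quasi-tree is a geodesic metric space quasi-isometric to a simplicial tree. End-approximating tree: with $(x,y)_{x_0}=\frac12(d(x_0,x)+d(x_0,y)-d(x,y))$, let $(x,y)'_{x_0}=\sup\min_{1\leqslant i\leqslant n-1}(x_i,x_{i+1})_{x_0}$, the supremum over all finite sequences $x=x_1,\ldots,x_n=y$ in $X$, and $d'(x,y)=d(x_0,x)+d(x_0,y)-2(x,y)'_{x_0}$; $T_X=X/\sim$ with $x\sim y$ iff $d'(x,y)=0$, and $d^*([x],[y])=d'(x,y)$ (it is an $\mathbb{R}$-tree). For a hyperbolic metric space $Y$ with basepoint $y_0$: a sequence $(x_n)$ converges to infinity if $(x_i,x_j)_{y_0}\to\infty$ as $i,j\to\infty$; two such sequences $(x_n),(y_n)$ are equivalent if $\liminf_{i,j\to\infty}(x_i,y_j)_{y_0}=\infty$; the sequential boundary $\partial Y$ is the set of equivalence classes. For $p,q\in\partial Y$, $(p,q)_{y_0}=\sup\{\liminf_{i,j\to\infty}(x_i,y_j)_{y_0}: (x_i)\in p,\ (y_j)\in q\}$. A metric $d_{\partial Y}$ on $\partial Y$ is a visual metric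 with parameter $a>1$ if there is $K\geqslant 1$ with $\frac1K a^{-(p,q)_{y_0}}\leqslant d_{\partial Y}(p,q)\leqslant K a^{-(p,q)_{y_0}}$ for all $p,q\in\partial Y$. *)

From Stdlib Require Import Reals Lra List ClassicalEpsilon.
From Coquelicot Require Import Coquelicot.
Open Scope R_scope.
Set Implicit Arguments.

Definition is_metric (X : Type) (d : X -> X -> R) : Prop :=
  (forall x y, 0 <= d x y) /\
  (forall x y, d x y = 0 <-> x = y) /\
  (forall x y, d x y = d y x) /\
  (forall x y z, d x z <= d x y + d y z).

Definition geodesic (X : Type) (d : X -> X -> R) : Prop :=
  forall x y, exists g : R -> X,
    g 0 = x /\ g (d x y) = y /\
    forall s t, 0 <= s <= d x y -> 0 <= t <= d x y ->
      d (g s) (g t) = Rabs (s - t).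

(* is_walk E u l v : u, l_1, ..., l_n is a walk with l_n = v (length n = length l) *)
Fixpoint is_walk (V : Type) (E : V -> V -> Prop) (u : V) (l : list V) (v : V) : Prop :=
  match l with
  | nil => u = v
  | w :: l' => E u w /\ is_walk E w l' v
  end.

Definition is_tree (V : Type) (E : V -> V -> Prop) : Prop :=
  (forall u v, E u v -> E v u) /\
  (forall u, ~ E u u) /\
  (forall u v, exists l, is_walk E u l v) /\
  (forall u l, is_walk E u l u -> (3 <= length l)%nat -> ~ NoDup l).

Definition gdist (V : Type) (E : V -> V -> Prop) (u v : V) (n : nat) : Prop :=
  (exists l, is_walk E u l v /\ length l = n) /\
  (forall l, is_walk E u l v -> (n <= length l)%nat).

Definition quasi_isometric_to_tree (X : Type) (d : X -> X -> R)
    (V : Type) (E : V -> V -> Prop) : Prop :=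
  exists (f : X -> V) (K C : R), 1 <= K /\ 0 <= C /\
    (forall x y n, gdist E (f x) (f y) n ->
        d x y / K - C <= INR n <= K * d x y + C) /\
    (forall v, exists x n, gdist E (f x) v n /\ INR n <= C).

Definition quasi_tree (X : Type) (d : X -> X -> R) : Prop :=
  is_metric d /\ geodesic d /\
  exists (V : Type) (E : V -> V -> Prop), is_tree E /\ quasi_isometric_to_tree d E.

Definition gp (X : Type) (d : X -> X -> R) (x0 x y : X) : R :=
  (d x0 x + d x0 y - d x y) / 2.

Fixpoint chain_min (X : Type) (d : X -> X -> R) (x0 : X) (u : X) (l : list X) (y : X) : R :=
  match l with
  | nil => gp d x0 u y
  | w :: l' => Rmin (gp d x0 u w) (chain_min d x0 w l' y)
  end.

(* (x,y)'_{x0} : sup over all finite sequences x = x_1, ..., x_n = y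
   (this sup is bounded above by d(x0,x), hence finite) *)
Definition gp' (X : Type) (d : X -> X -> R) (x0 x y : X) : R :=
  real (Lub_Rbar (fun r => exists l : list X, r = chain_min d x0 x l y)).

Definition dprime (X : Type) (d : X -> X -> R) (x0 x y : X) : R :=
  d x0 x + d x0 y - 2 * gp' d x0 x y.

(* T_X = X / ~ , x ~ y iff d'(x,y) = 0 ; points are the equivalence classes *)
Definition TX (X : Type) (d : X -> X -> R) (x0 : X) : Type :=
  { P : X -> Prop | exists x, P = (fun y => dprime d x0 x y = 0) }.

Definition TX_class (X : Type) (d : X -> X -> R) (x0 x : X) : TX d x0 :=
  exist _ (fun y => dprime d x0 x y = 0) (ex_intro _ x eq_refl).

Definition TX_rep (X : Type) (d : X -> X -> R) (x0 : X) (P : TX d x0) : X :=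
  proj1_sig (constructive_indefinite_description _ (proj2_sig P)).

Definition dstar (X : Type) (d : X -> X -> R) (x0 : X) (P Q : TX d x0) : R :=
  dprime d x0 (TX_rep P) (TX_rep Q).

Definition dliminf (u : nat -> nat -> R) : Rbar :=
  Rbar_lub (fun t => exists N : nat,
    t = Glb_Rbar (fun r => exists i j, (N <= i)%nat /\ (N <= j)%nat /\ r = u i j)).

Definition conv_inf (Y : Type) (dY : Y -> Y -> R) (y0 : Y) (x : nat -> Y) : Prop :=
  forall M : R, exists N : nat, forall i j, (N <= i)%nat -> (N <= j)%nat ->
    M <= gp dY y0 (x i) (x j).

Definition seq_equiv (Y : Type) (dY : Y -> Y -> R) (y0 : Y) (x y : nat -> Y) : Prop :=
  dliminf (fun i j => gp dY y0 (x i) (y j)) = p_infty.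

Definition bnd (Y : Type) (dY : Y -> Y -> R) (y0 : Y) : Type :=
  { P : (nat -> Y) -> Prop |
      exists x, conv_inf dY y0 x /\
        P = (fun y => conv_inf dY y0 y /\ seq_equiv dY y0 x y) }.

Definition bgp (Y : Type) (dY : Y -> Y -> R) (y0 : Y) (p q : bnd dY y0) : Rbar :=
  Rbar_lub (fun t => exists x y, proj1_sig p x /\ proj1_sig q y /\
    t = dliminf (fun i j => gp dY y0 (x i) (y j))).

(* a^{-t}, with a^{-oo} = 0 (the value at -oo never occurs: products are >= 0) *)
Definition vis (a : R) (t : Rbar) : R :=
  match t with
  | Finite r => Rpower a (- r)
  | p_infty => 0
  | m_infty => 0
  end.

Definition visual_metric (Y : Type) (dY : Y -> Y -> R) (y0 : Y) (a : R)
    (dB : bnd dY y0 -> bnd dY y0 -> R) : Prop :=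
  is_metric dB /\
  exists K : R, 1 <= K /\ forall p q,
    / K * vis a (bgp p q) <= dB p q /\ dB p q <= K * vis a (bgp p q).

Definition dbTX (X : Type) (d : X -> X -> R) (x0 : X) (a : R)
    (p q : bnd (@dstar X d x0) (TX_class d x0 x0)) : R :=
  vis a (bgp p q).

(* The modified Gromov product [(x,y)'] (the sup over chains from [x] to [y] of the least
   consecutive Gromov product) dominates [(x,y)], satisfies the ultrametric inequality, and is
   the Gromov product of [T_X] based at [[x0]].  In a quasi-tree it exceeds [(x,y)] by at most
   [3 Delta]: a chain whose consecutive products exceed [t] gives a walk in the approximating
   simplicial tree staying near points at distance [>= t] from [x0], and by the bottleneck
   property of quasi-trees the centre of a geodesic [x, y] is [Delta]-close to such a point.
   So [x |-> [x]] distorts Gromov products boundedly; it therefore induces a bijection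
   [∂X -> ∂T_X] changing boundary Gromov products by at most [3 Delta], and pulling back the
   standard visual metric of [∂T_X] along it gives a visual metric on [∂X] with multiplicative
   constant [a^(3 Delta)], isometric to [∂T_X] by construction. *)

From Stdlib Require Import Reals.
From Coquelicot Require Import Coquelicot.
From Stdlib Require Import ZArith Lra Lia List Wf_nat Classical ClassicalEpsilon
  FunctionalExtensionality PropExtensionality ProofIrrelevance.
Open Scope R_scope.

Lemma Rbar_lub_ub (E : Rbar -> Prop) x : E x -> Rbar_le x (Rbar_lub E).
Proof. unfold Rbar_lub; destruct (Rbar_ex_lub E) as [l [H1 H2]]; simpl; auto. Qed.

Lemma Rbar_lub_le (E : Rbar -> Prop) b :
  (forall x, E x -> Rbar_le x b) -> Rbar_le (Rbar_lub E) b.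
Proof. unfold Rbar_lub; destruct (Rbar_ex_lub E) as [l [H1 H2]]; simpl; auto. Qed.

Lemma Rbar_lub_gt (E : Rbar -> Prop) (M : R) :
  Rbar_lt M (Rbar_lub E) -> exists t, E t /\ Rbar_lt M t.
Proof.
  intros H. apply NNPP; intros Hn. apply (Rbar_le_not_lt M (Rbar_lub E)); auto.
  apply Rbar_lub_le. intros x Ex. apply Rbar_not_lt_le. intros Hl. apply Hn; eauto.
Qed.

Lemma Rbar_le_from_below (A B : Rbar) :
  (forall M : R, Rbar_lt M A -> Rbar_le M B) -> Rbar_le A B.
Proof.
  intros H. destruct A as [a| |]; destruct B as [b| |]; simpl in *; auto.
  - destruct (Rle_dec a b) as [|Hab]; auto.
    assert ((a + b) / 2 <= b) by (apply H; lra). lra.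
  - apply (H (a - 1)); lra.
  - specialize (H (b + 1) I); lra.
  - apply (H 0); auto.
Qed.

Lemma Glb_Rbar_le (E : R -> Prop) x : E x -> Rbar_le (Glb_Rbar E) x.
Proof. intros Ex. apply (proj1 (Glb_Rbar_correct E)); auto. Qed.

Lemma Glb_Rbar_ge (E : R -> Prop) (M : R) :
  (forall x, E x -> M <= x) -> Rbar_le M (Glb_Rbar E).
Proof. intros H. apply (proj2 (Glb_Rbar_correct E)). intros x Ex. simpl. auto. Qed.

Definition diverges2 (u : nat -> nat -> R) : Prop :=
  forall M, exists N, forall i j, (N <= i)%nat -> (N <= j)%nat -> M <= u i j.

Lemma diverges2_shift (u v : nat -> nat -> R) D :
  diverges2 u -> (forall i j, u i j <= v i j + D) -> diverges2 v.
Proof.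
  intros H Hle M. destruct (H (M + D)) as [N HN]. exists N. intros i j Hi Hj.
  specialize (HN i j Hi Hj). specialize (Hle i j). lra.
Qed.

Lemma dliminf_ge (u : nat -> nat -> R) (N : nat) (M : R) :
  (forall i j, (N <= i)%nat -> (N <= j)%nat -> M <= u i j) -> Rbar_le M (dliminf u).
Proof.
  intros H. eapply Rbar_le_trans; [| apply Rbar_lub_ub; exists N; reflexivity].
  apply Glb_Rbar_ge. intros x (i & j & Hi & Hj & ->). auto.
Qed.

Lemma dliminf_gt (u : nat -> nat -> R) (M : R) :
  Rbar_lt M (dliminf u) ->
  exists N, forall i j, (N <= i)%nat -> (N <= j)%nat -> M <= u i j.
Proof.
  intros H. apply Rbar_lub_gt in H. destruct H as [t [[N ->] Ht]].
  exists N. intros i j Hi Hj.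
  assert (Rbar_lt M (u i j)).
  { eapply Rbar_lt_le_trans; [exact Ht|]. apply Glb_Rbar_le. exists i, j; auto. }
  simpl in *; lra.
Qed.

Lemma dliminf_pinfty (u : nat -> nat -> R) : dliminf u = p_infty <-> diverges2 u.
Proof.
  split.
  - intros H M. apply dliminf_gt. rewrite H. simpl; auto.
  - intros H. destruct (H (real (dliminf u) + 1)) as [N HN].
    pose proof (dliminf_ge u N _ HN).
    destruct (dliminf u); simpl in *; tauto || lra.
Qed.

Section Walks.
Context {V : Type} {E : V -> V -> Prop}.

Lemma walk_app {a l1 b l2 c} :
  is_walk E a l1 b -> is_walk E b l2 c -> is_walk E a (l1 ++ l2) c.
Proof.
  revert a; induction l1 as [|y l1 IH]; intros a H1 H2; simpl in *.
  - subst; auto.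
  - destruct H1; split; [auto|]. eapply IH; eauto.
Qed.

Lemma walk_split {a l1 l2 c} :
  is_walk E a (l1 ++ l2) c -> exists b, is_walk E a l1 b /\ is_walk E b l2 c.
Proof.
  revert a; induction l1 as [|y l1 IH]; intros a H; simpl in *.
  - exists a; auto.
  - destruct H as [H1 H2]. destruct (IH _ H2) as [b [Hb1 Hb2]]. exists b; auto.
Qed.

Lemma walk_last_in {a l b} : is_walk E a l b -> l <> nil -> In b l.
Proof.
  revert a; induction l as [|y l IH]; intros a H Hn; simpl in *.
  - congruence.
  - destruct H as [_ H]. destruct l as [|z l'].
    + simpl in H; auto.
    + right. apply (IH y); auto; discriminate.
Qed.

Lemma walk_prefix_to {a l b x} :
  is_walk E a l b -> In x l -> exists l1, is_walk E a l1 x /\ (length l1 <= length l)%nat.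
Proof.
  intros Hw Hin. destruct (in_split _ _ Hin) as [l1 [l2 ->]].
  destruct (walk_split Hw) as [c [Hc1 [Hcx _]]].
  exists (l1 ++ x :: nil). split.
  - apply (walk_app Hc1). simpl; auto.
  - rewrite !length_app; simpl; lia.
Qed.

Lemma loop_erase {a m b} :
  is_walk E a m b -> exists m', is_walk E a m' b /\ NoDup (a :: m') /\ incl m' m.
Proof.
  revert a; induction m as [|y m0 IH]; intros a H; simpl in H.
  - exists nil. split; [auto|split]. constructor; [intros []|constructor]. intros x [].
  - destruct H as [Hay Hw]. destruct (IH _ Hw) as [m'' [Hw'' [Hnd Hinc]]].
    destruct (classic (In a (y :: m''))) as [[Hy|Hin]|Hnin].
    + subst y. exists m''. repeat split; auto. intros x Hx. right; auto.
    + destruct (in_split _ _ Hin) as [m1 [m2 ->]].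
      destruct (walk_split Hw'') as [c [_ [_ Hc]]].
      exists m2. repeat split; auto.
      * apply (NoDup_app_remove_l (y :: m1)); simpl; auto.
      * intros x Hx. right. apply Hinc, in_or_app. right. right. auto.
    + exists (y :: m''). repeat split; simpl; auto.
      * constructor; auto.
      * intros x [Hx|Hx]; [left; auto | right; auto].
Qed.

End Walks.

Section Tree.
Context {V : Type} {E : V -> V -> Prop} (HT : is_tree E).

Lemma edge_sym u v : E u v -> E v u.
Proof. apply HT. Qed.

Lemma edge_irrefl u : ~ E u u.
Proof. apply HT. Qed.

Lemma walk_suffix_from {a l b x} :
  is_walk E a l b -> In x l -> exists l2, is_walk E x l2 b /\ (length l2 < length l)%nat.
Proof.
  intros Hw Hin. destruct (in_split _ _ Hin) as [l1 [l2 ->]].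
  destruct (walk_split Hw) as [c [_ [_ Hx]]].
  exists l2. split; auto. rewrite length_app; simpl; lia.
Qed.

Lemma walk_rev {a l b} :
  is_walk E a l b -> exists l', is_walk E b l' a /\ length l' = length l /\
     (forall x, In x l' -> x = a \/ In x l).
Proof.
  revert a; induction l as [|y l IH]; intros a H; simpl in H.
  - subst. exists nil. split; [reflexivity|split; [reflexivity| intros x []]].
  - destruct H as [Hay Hw]. destruct (IH _ Hw) as [l' [Hw' [Hl Hin]]].
    exists (l' ++ a :: nil). repeat split.
    + apply (walk_app Hw'). simpl. split; auto. apply edge_sym; auto.
    + rewrite length_app; simpl; lia.
    + intros x Hx. apply in_app_or in Hx. destruct Hx as [Hx|[Hx|[]]]; auto.
      destruct (Hin x Hx) as [->|Hx']; right; simpl; auto.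
Qed.

Lemma gdist_ex u v : exists n, gdist E u v n.
Proof.
  destruct HT as [_ [_ [Hconn _]]].
  destruct (dec_inh_nat_subset_has_unique_least_element
              (fun n => exists l, is_walk E u l v /\ length l = n)) as [n [[Hn Hmin] _]].
  { intros n. apply classic. }
  { destruct (Hconn u v) as [l Hl]. eauto. }
  exists n. split; [auto|]. intros l Hl. apply Hmin. eauto.
Qed.

Definition dV (u v : V) : nat :=
  proj1_sig (constructive_indefinite_description _ (gdist_ex u v)).

Lemma dV_spec u v : gdist E u v (dV u v).
Proof. unfold dV. destruct (constructive_indefinite_description _ _); simpl; auto. Qed.

Lemma dV_le_walk {u l v} : is_walk E u l v -> (dV u v <= length l)%nat.
Proof. apply (proj2 (dV_spec u v)). Qed.

Lemma dV_walk u v : exists l, is_walk E u l v /\ length l = dV u v.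
Proof. apply (proj1 (dV_spec u v)). Qed.

Lemma dV_tri u v w : (dV u w <= dV u v + dV v w)%nat.
Proof.
  destruct (dV_walk u v) as [l1 [H1 L1]]. destruct (dV_walk v w) as [l2 [H2 L2]].
  pose proof (dV_le_walk (walk_app H1 H2)). rewrite length_app in H. lia.
Qed.

Lemma dV_sym u v : dV u v = dV v u.
Proof.
  assert (Hle : forall u v, (dV u v <= dV v u)%nat).
  { intros a b. destruct (dV_walk b a) as [l [H L]].
    destruct (walk_rev H) as [l' [H' [L' _]]]. pose proof (dV_le_walk H'). lia. }
  pose proof (Hle u v); pose proof (Hle v u); lia.
Qed.

Lemma dV_refl u : dV u u = 0%nat.
Proof. pose proof (@dV_le_walk u nil u eq_refl). simpl in H; lia. Qed.

Lemma dV_le_walk_to {u l b x} : is_walk E u l b -> In x l -> (dV u x <= length l)%nat.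
Proof.
  intros Hw Hin. destruct (walk_prefix_to Hw Hin) as [l1 [H1 L1]].
  pose proof (dV_le_walk H1). lia.
Qed.

Lemma dV_split_point Z A k :
  (k <= dV Z A)%nat -> exists c, dV Z c = k /\ dV c A = (dV Z A - k)%nat.
Proof.
  intros Hk. destruct (dV_walk Z A) as [l [Hl L]].
  rewrite <- (firstn_skipn k l) in Hl.
  destruct (walk_split Hl) as [c [H1 H2]].
  pose proof (dV_le_walk H1) as L1. pose proof (dV_le_walk H2) as L2.
  rewrite length_firstn in L1. rewrite length_skipn in L2.
  pose proof (dV_tri Z c A). exists c. lia.
Qed.

(* Two distinct neighbours of [w] joined by a walk avoiding [w] would close a cycle. *)
Lemma neighbours_separated w p s m :
  E p w -> E w s -> p <> s -> is_walk E s m p -> ~ In w m -> False.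
Proof.
  intros Hpw Hws Hps Hm Hwm.
  destruct (loop_erase Hm) as [m' [Hm' [Hnd Hinc]]].
  destruct HT as [_ [_ [_ Hacyc]]].
  apply (Hacyc w (s :: m' ++ w :: nil)).
  - split; auto. apply (walk_app Hm'). simpl; auto.
  - destruct m' as [|y m'']; simpl in *; [congruence|]. rewrite length_app; simpl; lia.
  - change (NoDup ((s :: m') ++ w :: nil)). apply NoDup_app; auto.
    + repeat constructor. intros [].
    + intros x [->|Hx] [Hxw|[]]; subst x.
      * apply (edge_irrefl w); auto.
      * apply Hwm, Hinc; auto.
Qed.

Theorem tree_cut u w v q :
  (dV u w + dV w v = dV u v)%nat -> is_walk E u q v -> w = u \/ In w q.
Proof.
  intros Hd Hq. apply NNPP. intros Hn.
  assert (Hwu : w <> u) by (intros ->; apply Hn; auto).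
  assert (Hwq : ~ In w q) by (intros ?; apply Hn; auto).
  clear Hn.
  assert (Hwv : w <> v).
  { intros ->. destruct q as [|y q]; [simpl in Hq; congruence|].
    apply Hwq, (walk_last_in Hq). discriminate. }
  destruct (dV_walk u w) as [l1 [H1 L1]].
  destruct (dV_walk w v) as [l2 [H2 L2]].
  destruct l1 as [|p0 l1] using rev_ind; [simpl in H1; congruence|]. clear IHl1.
  destruct (walk_split H1) as [p [Hup [Hpw Hw]]]. simpl in Hw. subst p0.
  rewrite length_app in L1; simpl in L1.
  destruct l2 as [|s l2]; [simpl in H2; congruence|].
  destruct H2 as [Hws Hsv]. simpl in L2.
  assert (Hps : p <> s).
  { intros ->. pose proof (dV_le_walk (walk_app Hup Hsv)). rewrite length_app in H. lia. }
  assert (Hw1 : ~ In w l1) by (intros Hi; pose proof (dV_le_walk_to Hup Hi); lia).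
  assert (Hw2 : ~ In w l2).
  { intros Hi. destruct (walk_suffix_from Hsv Hi) as [l3 [H3 L3]].
    pose proof (dV_le_walk H3). lia. }
  destruct (walk_rev Hq) as [rq [Hrq [_ Hrqin]]].
  apply (neighbours_separated w p s (l2 ++ rq ++ l1)); auto.
  - apply (walk_app Hsv), (walk_app Hrq), Hup.
  - intros Hi. apply in_app_or in Hi as [Hi|Hi]; auto.
    apply in_app_or in Hi as [Hi|Hi]; auto.
    destruct (Hrqin w Hi); auto.
Qed.

Theorem tree_pinch Z A B (W : list V) (k : nat) :
  is_walk E A W B -> (forall v, v = A \/ In v W -> (k < dV Z v)%nat) ->
  exists c, dV Z c = k /\
    (forall l, is_walk E A l Z -> c = A \/ In c l) /\
    (forall l, is_walk E Z l B -> c = Z \/ In c l).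
Proof.
  intros HW Hfar.
  pose proof (Hfar A (or_introl eq_refl)) as HkA.
  destruct (dV_split_point Z A k) as [c [Hc1 Hc2]]; [lia|].
  assert (Hcut : forall l, is_walk E A l Z -> c = A \/ In c l).
  { intros l Hl. apply tree_cut with Z; auto.
    rewrite (dV_sym A c), (dV_sym A Z), (dV_sym c Z). lia. }
  exists c. split; auto. split; auto.
  intros l Hl. apply NNPP. intros Hn.
  destruct (walk_rev Hl) as [r [Hr [_ Hrin]]].
  destruct (Hcut _ (walk_app HW Hr)) as [->|Hin]; [lia|].
  apply in_app_or in Hin as [Hin|Hin].
  - specialize (Hfar c (or_intror Hin)). lia.
  - destruct (Hrin _ Hin) as [->|Hi]; apply Hn; auto.
Qed.

End Tree.


Definition geodesic_segment {X : Type} (d : X -> X -> R) (g : R -> X) (x y : X) : Prop :=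
  g 0 = x /\ g (d x y) = y /\
  forall s t, 0 <= s <= d x y -> 0 <= t <= d x y -> d (g s) (g t) = Rabs (s - t).

Section Segment.
Context {X : Type} {d : X -> X -> R} {g : R -> X} {x y : X} (Hg : geodesic_segment d g x y).

Lemma segment_dist s t : 0 <= s <= t -> t <= d x y -> d (g s) (g t) = t - s.
Proof.
  intros Hs Ht. destruct Hg as [_ [_ Hiso]].
  rewrite Hiso by lra. rewrite Rabs_left1 by lra. ring.
Qed.

Lemma segment_dist_start t : 0 <= t <= d x y -> d x (g t) = t.
Proof.
  intros Ht. destruct Hg as [G0 _]. rewrite <- G0 at 1.
  rewrite segment_dist by lra. ring.
Qed.

Lemma segment_dist_end t : 0 <= t <= d x y -> d (g t) y = d x y - t.
Proof.
  intros Ht. destruct Hg as [_ [GL _]]. rewrite <- GL at 1.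
  apply segment_dist; lra.
Qed.

End Segment.

Section Metric.
Context {X : Type} {d : X -> X -> R} (Hm : is_metric d).

Lemma dist_nonneg x y : 0 <= d x y. Proof. apply Hm. Qed.
Lemma dist_sym x y : d x y = d y x. Proof. apply Hm. Qed.
Lemma dist_tri x y z : d x z <= d x y + d y z. Proof. apply Hm. Qed.
Lemma dist_refl x : d x x = 0. Proof. apply Hm; auto. Qed.

Lemma gp_le_l x0 x y : gp d x0 x y <= d x0 x.
Proof. unfold gp. pose proof (dist_tri x0 x y). lra. Qed.

Lemma gp_le_r x0 x y : gp d x0 x y <= d x0 y.
Proof. unfold gp. pose proof (dist_tri x0 y x). rewrite (dist_sym y x) in *. lra. Qed.

Lemma gp_sym x0 x y : gp d x0 x y = gp d x0 y x.
Proof. unfold gp. rewrite (dist_sym x y). lra. Qed.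

Lemma gp_nonneg x0 x y : 0 <= gp d x0 x y.
Proof. unfold gp. pose proof (dist_tri x x0 y). rewrite (dist_sym x x0) in *. lra. Qed.

Lemma gp_le_segment g x y x0 t :
  geodesic_segment d g x y -> 0 <= t <= d x y -> gp d x0 x y <= d x0 (g t).
Proof.
  intros Hg Ht. unfold gp.
  pose proof (dist_tri x0 (g t) x). pose proof (dist_tri x0 (g t) y).
  rewrite (dist_sym (g t) x), (segment_dist_start Hg), (segment_dist_end Hg) in * by lra.
  lra.
Qed.

Lemma tripod_leg_bounds x0 x y : 0 <= (d x y + d x x0 - d y x0) / 2 <= d x y.
Proof.
  pose proof (dist_tri x x0 y). pose proof (dist_tri y x x0). pose proof (dist_tri x y x0).
  rewrite (dist_sym y x), (dist_sym x0 y) in *. lra.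
Qed.

(* [(d x y + d x x0 - d y x0) / 2] is the leg at [x] of the comparison tripod of the
   triangle [x y x0]. *)
Lemma tripod_side x0 x y z p δ :
  d x p + d p x0 = d x x0 -> d x z = (d x y + d x x0 - d y x0) / 2 -> d z p <= δ ->
  d x0 z <= gp d x0 x y + 2 * δ.
Proof.
  intros Hp Hz Hzp. unfold gp.
  pose proof (dist_tri x p z). pose proof (dist_tri x0 p z).
  rewrite (dist_sym p z), (dist_sym x0 p), (dist_sym x0 x), (dist_sym y x0) in *. lra.
Qed.

End Metric.

Lemma nat_in_unit_interval (r : R) : 0 <= r -> exists k : nat, r - 1 < INR k <= r.
Proof.
  intros Hr. destruct (archimed r) as [Hup Hup'].
  assert (Hpos : (0 < up r)%Z) by (apply lt_IZR; simpl; lra).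
  exists (Z.to_nat (up r - 1)).
  rewrite INR_IZR_INZ, Z2Nat.id, minus_IZR by lia. simpl. lra.
Qed.

Lemma Rdiv_le_1 a b : 0 < b -> a <= b -> a / b <= 1.
Proof.
  intros Hb Hab. apply (Rmult_le_reg_r b); auto.
  unfold Rdiv. rewrite Rmult_assoc, Rinv_l by lra. lra.
Qed.

Section QuasiTree.
Context {X : Type} {d : X -> X -> R} (Hm : is_metric d) (Hgeo : geodesic d).
Context {V : Type} {E : V -> V -> Prop} (HT : is_tree E).
Variables (f : X -> V) (K C : R).
Hypotheses (HK : 1 <= K) (HC : 0 <= C).
Hypothesis HQI : forall x y n, gdist E (f x) (f y) n -> d x y / K - C <= INR n <= K * d x y + C.

Notation dT := (dV HT).

Lemma qi_lower x y : d x y / K - C <= INR (dT (f x) (f y)).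
Proof. apply (HQI x y), dV_spec. Qed.

Lemma qi_upper x y : INR (dT (f x) (f y)) <= K * d x y + C.
Proof. apply (HQI x y), dV_spec. Qed.

Lemma INR_dV_tri u v w : INR (dT u w) <= INR (dT u v) + INR (dT v w).
Proof. rewrite <- plus_INR. apply le_INR, dV_tri. Qed.

(* [near_radius] bounds the tree distance between images of points at distance [<= 1];
   [fellow_radius] bounds the distance of two points whose images are [near_radius]-close
   to a common vertex; [Delta] is large enough for the pinching argument of [bottleneck]. *)
Definition near_radius := K + C.
Definition fellow_radius := K * (2 * near_radius + C).
Definition Delta := K * (K * fellow_radius + 2 * C + 2 * near_radius + 2).

Lemma near_radius_nonneg : 0 <= near_radius.
Proof. unfold near_radius; lra. Qed.

Lemma fellow_radius_nonneg : 0 <= fellow_radius.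
Proof. unfold fellow_radius, near_radius. nra. Qed.

Lemma Delta_nonneg : 0 <= Delta.
Proof. unfold Delta. pose proof fellow_radius_nonneg. pose proof near_radius_nonneg. nra. Qed.

Definition near (P : X -> Prop) (v : V) : Prop :=
  exists p, P p /\ INR (dT v (f p)) <= near_radius.

Lemma near_mono (P Q : X -> Prop) v : (forall p, P p -> Q p) -> near P v -> near Q v.
Proof. intros H [p [Hp Hd]]. exists p; auto. Qed.

Lemma near_image (P : X -> Prop) p : P p -> near P (f p).
Proof.
  intros Hp. exists p. split; auto. rewrite dV_refl. simpl. apply near_radius_nonneg.
Qed.

Lemma near_dist_lower (P : X -> Prop) z r v :
  (forall p, P p -> r <= d z p) -> near P v -> r / K - C - near_radius <= INR (dT (f z) v).
Proof.
  intros Hfar [p [Hp Hvp]].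
  pose proof (qi_lower z p). pose proof (INR_dV_tri (f z) v (f p)).
  assert (r / K <= d z p / K).
  { apply Rmult_le_compat_r; [left; apply Rinv_0_lt_compat; lra | auto]. }
  lra.
Qed.

Lemma near_common_vertex c p1 p2 :
  INR (dT c (f p1)) <= near_radius -> INR (dT c (f p2)) <= near_radius ->
  d p1 p2 <= fellow_radius.
Proof.
  intros H1 H2. pose proof (qi_lower p1 p2). pose proof (INR_dV_tri (f p1) c (f p2)).
  rewrite (dV_sym HT (f p1) c) in H0. unfold fellow_radius.
  replace (d p1 p2) with (K * (d p1 p2 / K)) by (field; lra).
  apply Rmult_le_compat_l; lra.
Qed.

Lemma walk_along_chain (q : nat -> X) (P : X -> Prop) N :
  (forall j, (j <= N)%nat -> P (q j)) ->
  (forall j, (j < N)%nat -> d (q j) (q (S j)) <= 1) ->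
  exists W, is_walk E (f (q 0%nat)) W (f (q N)) /\ forall v, In v W -> near P v.
Proof.
  induction N as [|N IH]; intros HP Hstep.
  - exists nil. split; [reflexivity | intros v []].
  - destruct IH as [W [HW Hn]]; [intros; apply HP; lia | intros; apply Hstep; lia |].
    destruct (dV_walk HT (f (q N)) (f (q (S N)))) as [l [Hl Ll]].
    exists (W ++ l). split; [eapply walk_app; eauto|].
    intros v Hv. apply in_app_or in Hv as [Hv|Hv]; auto.
    exists (q N). split; [apply HP; lia|].
    pose proof (dV_le_walk_to HT Hl Hv) as Hle. rewrite dV_sym, Ll in Hle. apply le_INR in Hle.
    pose proof (qi_upper (q N) (q (S N))). pose proof (Hstep N (Nat.lt_succ_diag_r N)).
    unfold near_radius. nra.
Qed.

Lemma walk_along_segment (P : X -> Prop) g x y t1 t2 :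
  geodesic_segment d g x y -> 0 <= t1 <= d x y -> 0 <= t2 <= d x y ->
  (forall t, Rmin t1 t2 <= t <= Rmax t1 t2 -> P (g t)) ->
  exists W, is_walk E (f (g t1)) W (f (g t2)) /\ forall v, In v W -> near P v.
Proof.
  intros [_ [_ Hiso]] H1 H2 HP.
  destruct (INR_unbounded (Rabs (t2 - t1))) as [N HN].
  assert (HN0 : 0 < INR N) by (pose proof (Rabs_pos (t2 - t1)); lra).
  set (tau := fun j : nat => t1 + (INR j / INR N) * (t2 - t1)).
  assert (Htau : forall j, (j <= N)%nat -> Rmin t1 t2 <= tau j <= Rmax t1 t2).
  { intros j Hj. apply le_INR in Hj.
    assert (0 <= INR j / INR N <= 1).
    { split; [apply Rdiv_le_0_compat; [apply pos_INR | lra]|].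
      apply Rdiv_le_1; lra. }
    unfold tau, Rmin, Rmax. destruct (Rle_dec t1 t2); split; nra. }
  assert (Hrange : forall j, (j <= N)%nat -> 0 <= tau j <= d x y).
  { intros j Hj. pose proof (Htau j Hj).
    unfold Rmin, Rmax in *. destruct (Rle_dec t1 t2); lra. }
  destruct (walk_along_chain (fun j => g (tau j)) P N) as [W [HW Hn]].
  - intros j Hj. apply HP, Htau, Hj.
  - intros j Hj. rewrite Hiso by (apply Hrange; lia).
    unfold tau. rewrite S_INR.
    replace (t1 + INR j / INR N * (t2 - t1) - (t1 + (INR j + 1) / INR N * (t2 - t1)))
      with (- (t2 - t1) / INR N) by (field; lra).
    unfold Rdiv. rewrite Rabs_mult, Rabs_Ropp, Rabs_inv, (Rabs_right (INR N)) by lra.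
    apply Rdiv_le_1; lra.
  - exists W. split; auto.
    unfold tau in HW. simpl in HW.
    replace (t1 + 0 / INR N * (t2 - t1)) with t1 in HW by (field; lra).
    replace (t1 + INR N / INR N * (t2 - t1)) with t2 in HW by (field; lra). auto.
Qed.

Lemma cut_vertex_near_segment g x y t1 t2 c :
  geodesic_segment d g x y -> 0 <= t1 <= t2 -> t2 <= d x y ->
  (forall l, is_walk E (f (g t1)) l (f (g t2)) -> c = f (g t1) \/ In c l) ->
  exists t, t1 <= t <= t2 /\ INR (dT c (f (g t))) <= near_radius.
Proof.
  intros Hg H1 H2 Hcut.
  set (P := fun p => exists t, t1 <= t <= t2 /\ p = g t).
  destruct (walk_along_segment P g x y t1 t2 Hg ltac:(lra) ltac:(lra)) as [W [HW HWn]].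
  { intros t Ht. rewrite Rmin_left, Rmax_right in Ht by lra. exists t; auto. }
  destruct (Hcut W HW) as [->|Hin].
  - exists t1. split; [lra|]. rewrite dV_refl. simpl. apply near_radius_nonneg.
  - destruct (HWn c Hin) as [p [[t [Ht ->]] Hc]]. eauto.
Qed.

Lemma detour_walk (P : X -> Prop) x y g W s r :
  P x -> P y -> geodesic_segment d g x y ->
  is_walk E (f x) W (f y) -> (forall v, In v W -> near P v) ->
  0 <= r <= s -> s + r <= d x y -> (forall p, P p -> r <= d (g s) p) ->
  exists W', is_walk E (f (g (s - r))) W' (f (g (s + r))) /\
    forall v, v = f (g (s - r)) \/ In v W' -> near (fun p => r <= d (g s) p) v.
Proof.
  intros Px Py Hg HW HWn Hr Hs Hfar.
  pose proof Hg as [G0 [GL _]].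
  set (Q := fun p => r <= d (g s) p).
  assert (HQ : forall t, 0 <= t <= d x y -> r <= Rabs (s - t) -> Q (g t)).
  { intros t Ht Hst. unfold Q. destruct (Rle_dec t s).
    - rewrite (dist_sym Hm), (segment_dist Hg) by lra. rewrite Rabs_right in Hst; lra.
    - rewrite (segment_dist Hg) by lra. rewrite Rabs_left in Hst; lra. }
  destruct (walk_along_segment Q g x y (s - r) 0 Hg ltac:(lra) ltac:(lra)) as [Wa [HWa HWan]].
  { intros t Ht. rewrite Rmin_right, Rmax_left in Ht by lra.
    apply HQ; [lra|]. rewrite Rabs_right; lra. }
  destruct (walk_along_segment Q g x y (d x y) (s + r) Hg ltac:(lra) ltac:(lra))
    as [Wb [HWb HWbn]].
  { intros t Ht. rewrite Rmin_right, Rmax_left in Ht by lra.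
    apply HQ; [lra|]. rewrite Rabs_left1; lra. }
  rewrite G0 in HWa. rewrite GL in HWb.
  exists (Wa ++ W ++ Wb). split; [apply (walk_app HWa), (walk_app HW HWb)|].
  intros v [->|Hv].
  - apply near_image, HQ; [lra|]. rewrite Rabs_right; lra.
  - apply in_app_or in Hv as [Hv|Hv]; auto.
    apply in_app_or in Hv as [Hv|Hv]; auto.
    apply (near_mono P); auto.
Qed.

(* If [g s] were [Delta]-far from [P], a detour around [g s] would avoid a large tree ball
   around [f (g s)]; the vertex where it pinches the tree would then be near two far-apart
   points of the geodesic. *)
Theorem bottleneck (P : X -> Prop) x y g W :
  P x -> P y -> geodesic_segment d g x y ->
  is_walk E (f x) W (f y) -> (forall v, In v W -> near P v) ->
  forall s, 0 <= s <= d x y -> exists p, P p /\ d (g s) p <= Delta.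
Proof.
  intros Px Py Hg HW HWn s Hs. apply NNPP. intros Hno.
  assert (Hfar : forall p, P p -> Delta < d (g s) p).
  { intros p Pp. apply Rnot_le_lt. intros Hle. apply Hno. eauto. }
  pose proof Delta_nonneg. pose proof near_radius_nonneg. pose proof fellow_radius_nonneg.
  assert (Hs1 : Delta < s).
  { specialize (Hfar x Px). rewrite (dist_sym Hm), (segment_dist_start Hg) in Hfar; lra. }
  assert (Hs2 : s + Delta < d x y).
  { specialize (Hfar y Py). rewrite (segment_dist_end Hg) in Hfar; lra. }
  destruct (detour_walk P x y g W s Delta) as [W' [HW' HW'n]]; auto; try lra.
  { intros p Pp. left. auto. }
  set (rho := K * fellow_radius + C + near_radius + 2).
  assert (Hrho : forall v, v = f (g (s - Delta)) \/ In v W' -> rho <= INR (dT (f (g s)) v)).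
  { intros v Hv.
    pose proof (near_dist_lower _ (g s) Delta v (fun p Hp => Hp) (HW'n v Hv)) as Hlow.
    replace (Delta / K) with (K * fellow_radius + 2 * C + 2 * near_radius + 2) in Hlow
      by (unfold Delta; field; lra).
    unfold rho. lra. }
  destruct (nat_in_unit_interval (rho - 1)) as [k Hk].
  { unfold rho. nra. }
  destruct (tree_pinch HT (f (g s)) _ _ W' k HW') as [c [Hc [HcA HcB]]].
  { intros v Hv. apply INR_lt. pose proof (Hrho v Hv). lra. }
  destruct (cut_vertex_near_segment g x y (s - Delta) s c Hg ltac:(lra) ltac:(lra) HcA)
    as [t1 [Ht1 Hc1]].
  destruct (cut_vertex_near_segment g x y s (s + Delta) c Hg ltac:(lra) ltac:(lra) HcB)
    as [t2 [Ht2 Hc2]].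
  pose proof (near_common_vertex c (g t1) (g t2) Hc1 Hc2) as H12.
  rewrite (segment_dist Hg) in H12 by lra.
  pose proof (qi_upper (g s) (g t1)) as Hup.
  rewrite (dist_sym Hm), (segment_dist Hg) in Hup by lra.
  pose proof (INR_dV_tri (f (g s)) (f (g t1)) c) as Htri.
  rewrite Hc, (dV_sym HT _ c) in Htri.
  assert (K * (s - t1) <= K * fellow_radius) by (apply Rmult_le_compat_l; lra).
  unfold rho in Hk. lra.
Qed.

Lemma tripod x0 x y g :
  geodesic_segment d g x y ->
  d x0 (g ((d x y + d x x0 - d y x0) / 2)) <= gp d x0 x y + 2 * Delta.
Proof.
  intros Hg. set (al := (d x y + d x x0 - d y x0) / 2).
  pose proof (tripod_leg_bounds Hm x0 x y) as Hal. fold al in Hal.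
  destruct (Hgeo x x0) as [g1 Hg1]. destruct (Hgeo x0 y) as [g2 Hg2].
  pose proof (dist_nonneg Hm x x0). pose proof (dist_nonneg Hm x0 y).
  set (P := fun p => (exists t, 0 <= t <= d x x0 /\ p = g1 t) \/
                     (exists t, 0 <= t <= d x0 y /\ p = g2 t)).
  destruct (walk_along_segment P g1 x x0 0 (d x x0) Hg1 ltac:(lra) ltac:(lra))
    as [W1 [HW1 HW1n]].
  { intros t Ht. rewrite Rmin_left, Rmax_right in Ht by lra. left; eauto. }
  destruct (walk_along_segment P g2 x0 y 0 (d x0 y) Hg2 ltac:(lra) ltac:(lra))
    as [W2 [HW2 HW2n]].
  { intros t Ht. rewrite Rmin_left, Rmax_right in Ht by lra. right; eauto. }
  pose proof Hg1 as [G10 [G1L _]]. pose proof Hg2 as [G20 [G2L _]].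
  rewrite G10, G1L in HW1. rewrite G20, G2L in HW2.
  destruct (bottleneck P x y g (W1 ++ W2)) with (s := al) as [p [Pp Hp]]; auto.
  - left. exists 0. split; [lra | auto].
  - right. exists (d x0 y). split; [lra | auto].
  - apply (walk_app HW1 HW2).
  - intros v Hv. apply in_app_or in Hv as [Hv|Hv]; auto.
  - assert (Hxz : d x (g al) = al) by (apply (segment_dist_start Hg); lra).
    destruct Pp as [[t [Ht ->]]|[t [Ht ->]]].
    + apply (tripod_side Hm x0 x y _ (g1 t)); auto.
      rewrite (segment_dist_start Hg1), (segment_dist_end Hg1) by lra. ring.
    + rewrite (gp_sym Hm x0 x y).
      apply (tripod_side Hm x0 y x _ (g2 t)); auto.
      * rewrite (dist_sym Hm y (g2 t)), (dist_sym Hm (g2 t) x0), (dist_sym Hm y x0),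
          (segment_dist_start Hg2), (segment_dist_end Hg2) by lra. ring.
      * rewrite (dist_sym Hm y (g al)), (segment_dist_end Hg) by lra.
        unfold al. rewrite (dist_sym Hm y x). field.
Qed.

Lemma walk_high_segment x0 x y t :
  t <= gp d x0 x y ->
  exists W, is_walk E (f x) W (f y) /\ forall v, In v W -> near (fun p => t <= d x0 p) v.
Proof.
  intros Ht. destruct (Hgeo x y) as [g Hg].
  pose proof (dist_nonneg Hm x y).
  destruct (walk_along_segment (fun p => t <= d x0 p) g x y 0 (d x y) Hg ltac:(lra) ltac:(lra))
    as [W [HW HWn]].
  { intros s Hs. rewrite Rmin_left, Rmax_right in Hs by lra.
    pose proof (gp_le_segment Hm g x y x0 s Hg Hs). lra. }
  destruct Hg as [G0 [GL _]]. rewrite G0, GL in HW. eauto.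
Qed.

Lemma walk_high_chain x0 l x y t :
  t <= chain_min d x0 x l y ->
  t <= d x0 x /\ t <= d x0 y /\
  exists W, is_walk E (f x) W (f y) /\ forall v, In v W -> near (fun p => t <= d x0 p) v.
Proof.
  revert x. induction l as [|w l IH]; intros x Ht; simpl in Ht.
  - pose proof (gp_le_l Hm x0 x y). pose proof (gp_le_r Hm x0 x y).
    split; [lra | split; [lra | apply walk_high_segment; auto]].
  - pose proof (Rmin_l (gp d x0 x w) (chain_min d x0 w l y)).
    pose proof (Rmin_r (gp d x0 x w) (chain_min d x0 w l y)).
    destruct (IH w ltac:(lra)) as [Hw [Hy [W2 [HW2 HW2n]]]].
    destruct (walk_high_segment x0 x w t ltac:(lra)) as [W1 [HW1 HW1n]].
    pose proof (gp_le_l Hm x0 x w).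
    split; [lra | split; [lra|]]. exists (W1 ++ W2). split; [apply (walk_app HW1 HW2)|].
    intros v Hv. apply in_app_or in Hv as [Hv|Hv]; auto.
Qed.

(* A chain whose consecutive Gromov products exceed [t] yields a tree walk far from
   [x0]; by the bottleneck property the tripod centre of [x, y] is then far from [x0]. *)
Theorem chain_min_le_gp x0 x l y : chain_min d x0 x l y <= gp d x0 x y + 3 * Delta.
Proof.
  set (t := chain_min d x0 x l y).
  destruct (walk_high_chain x0 l x y t (Rle_refl _)) as [Hx [Hy [W [HW HWn]]]].
  destruct (Hgeo x y) as [g Hg].
  set (al := (d x y + d x x0 - d y x0) / 2).
  pose proof (tripod_leg_bounds Hm x0 x y) as Hal. fold al in Hal.
  destruct (bottleneck (fun p => t <= d x0 p) x y g W Hx Hy Hg HW HWn al Hal)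
    as [p [Hp Hpd]].
  pose proof (tripod x0 x y g Hg) as Htri. fold al in Htri.
  pose proof (dist_tri Hm x0 (g al) p). lra.
Qed.

End QuasiTree.

Section EndApproximatingTree.
Context {X : Type} {d : X -> X -> R} (Hm : is_metric d) (x0 : X).

Notation cm := (chain_min d x0).
Notation G := (gp' d x0).

Lemma chain_min_app x l1 w l2 y : cm x (l1 ++ w :: l2) y = Rmin (cm x l1 w) (cm w l2 y).
Proof.
  revert x; induction l1 as [|a l1 IH]; intros x; simpl; auto.
  rewrite IH, Rmin_assoc. reflexivity.
Qed.

Lemma chain_min_rev x l y : cm x l y = cm y (rev l) x.
Proof.
  revert x y; induction l as [|w l IH]; intros x y; simpl.
  - apply (gp_sym Hm).
  - rewrite chain_min_app, <- IH. simpl. rewrite Rmin_comm, (gp_sym Hm x0 w x). reflexivity.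
Qed.

Lemma chain_min_le_l x l y : cm x l y <= d x0 x.
Proof.
  destruct l; simpl; [apply (gp_le_l Hm)|].
  eapply Rle_trans; [apply Rmin_l | apply (gp_le_l Hm)].
Qed.

Lemma chain_min_le_r x l y : cm x l y <= d x0 y.
Proof. rewrite chain_min_rev. apply chain_min_le_l. Qed.

Lemma gp'_is_lub x y : is_lub_Rbar (fun r => exists l, r = cm x l y) (G x y).
Proof.
  set (Ech := fun r => exists l, r = cm x l y).
  pose proof (Lub_Rbar_correct Ech) as [Hub Hleast].
  assert (A : Rbar_le (Lub_Rbar Ech) (d x0 x)).
  { apply Hleast. intros r [l ->]. simpl. apply chain_min_le_l. }
  assert (B : Rbar_le (gp d x0 x y) (Lub_Rbar Ech)) by (apply Hub; exists nil; reflexivity).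
  unfold gp'. fold Ech.
  destruct (Lub_Rbar Ech) eqn:Eq; simpl in *; try contradiction. split; auto.
Qed.

Lemma gp'_ge_chain x l y : cm x l y <= G x y.
Proof. apply (proj1 (gp'_is_lub x y) (cm x l y)). exists l; auto. Qed.

Lemma gp'_le x y B : (forall l, cm x l y <= B) -> G x y <= B.
Proof. intros Hb. apply (proj2 (gp'_is_lub x y) B). intros r [l ->]. simpl. auto. Qed.

Lemma gp'_ge_gp x y : gp d x0 x y <= G x y.
Proof. apply (gp'_ge_chain x nil y). Qed.

Lemma gp'_le_l x y : G x y <= d x0 x.
Proof. apply gp'_le. intros; apply chain_min_le_l. Qed.

Lemma gp'_le_r x y : G x y <= d x0 y.
Proof. apply gp'_le. intros; apply chain_min_le_r. Qed.

Lemma gp'_nonneg x y : 0 <= G x y.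
Proof. pose proof (gp'_ge_gp x y). pose proof (gp_nonneg Hm x0 x y). lra. Qed.

Lemma gp'_sym x y : G x y = G y x.
Proof.
  assert (Hle : forall x y, G x y <= G y x).
  { intros a b. apply gp'_le. intros l. rewrite chain_min_rev. apply gp'_ge_chain. }
  pose proof (Hle x y); pose proof (Hle y x); lra.
Qed.

(* Concatenating near-optimal chains from [x] to [y] and from [y] to [z]. *)
Lemma gp'_ultra x y z : Rmin (G x y) (G y z) <= G x z.
Proof.
  apply Rnot_lt_le. intros Hlt.
  assert (Hchain : forall a b, G x z < G a b -> exists l, G x z < cm a l b).
  { intros a b Hab. apply NNPP. intros Hn.
    assert (G a b <= G x z) by (apply gp'_le; intros l; apply Rnot_lt_le; eauto). lra. }
  destruct (Hchain x y) as [l1 H1]; [eapply Rlt_le_trans; [apply Hlt | apply Rmin_l]|].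
  destruct (Hchain y z) as [l2 H2]; [eapply Rlt_le_trans; [apply Hlt | apply Rmin_r]|].
  pose proof (gp'_ge_chain x (l1 ++ y :: l2) z). rewrite chain_min_app in H.
  apply (Rlt_irrefl (G x z)). eapply Rlt_le_trans; [| exact H].
  apply Rmin_glb_lt; auto.
Qed.

Lemma gp'_refl x : G x x = d x0 x.
Proof.
  pose proof (gp'_ge_gp x x). pose proof (gp'_le_l x x).
  unfold gp in H. rewrite (dist_refl Hm) in H. lra.
Qed.

Lemma gp'_base_l y : G x0 y = 0.
Proof. pose proof (gp'_nonneg x0 y). pose proof (gp'_le_l x0 y). rewrite (dist_refl Hm) in *. lra. Qed.

Lemma dprime_refl x : dprime d x0 x x = 0.
Proof. unfold dprime. rewrite gp'_refl. ring. Qed.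

(* [d'(x, x') = 0] means [(x, x')' = |x| = |x'|], and the ultrametric inequality then
   forces [(x, y)' = (x', y)']. *)
Lemma gp'_congr x x' y : dprime d x0 x x' = 0 -> G x y = G x' y.
Proof.
  intros H. unfold dprime in H.
  pose proof (gp'_le_l x x'). pose proof (gp'_le_r x x').
  pose proof (gp'_ultra x' x y). pose proof (gp'_ultra x x' y).
  rewrite (gp'_sym x' x) in H2.
  pose proof (gp'_le_l x y). pose proof (gp'_le_l x' y).
  unfold Rmin in *. destruct (Rle_dec (G x x') (G x y)); destruct (Rle_dec (G x x') (G x' y)); lra.
Qed.

Lemma TX_rep_spec (P : TX d x0) : proj1_sig P = (fun y => dprime d x0 (TX_rep P) y = 0).
Proof.
  unfold TX_rep. destruct (constructive_indefinite_description _ _) as [x Hx]. simpl. auto.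
Qed.

Lemma TX_class_rep (P : TX d x0) : TX_class d x0 (TX_rep P) = P.
Proof.
  pose proof (TX_rep_spec P). destruct P as [Pp Hp]. unfold TX_class.
  apply subset_eq_compat. simpl in H. auto.
Qed.

Lemma dprime_rep_class x : dprime d x0 x (TX_rep (TX_class d x0 x)) = 0.
Proof.
  pose proof (f_equal (fun P => P (TX_rep (TX_class d x0 x))) (TX_rep_spec (TX_class d x0 x))).
  simpl in H. rewrite H. apply dprime_refl.
Qed.

Lemma TX_rep_base : TX_rep (TX_class d x0 x0) = x0.
Proof.
  pose proof (dprime_rep_class x0) as H. unfold dprime in H.
  rewrite gp'_base_l, (dist_refl Hm) in H. symmetry. apply Hm. lra.
Qed.

Lemma gp_dstar (P Q : TX d x0) :
  gp (@dstar X d x0) (TX_class d x0 x0) P Q = G (TX_rep P) (TX_rep Q).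
Proof.
  unfold gp, dstar, dprime. rewrite TX_rep_base, !gp'_base_l, (dist_refl Hm). lra.
Qed.

Lemma gp_dstar_class x y :
  gp (@dstar X d x0) (TX_class d x0 x0) (TX_class d x0 x) (TX_class d x0 y) = G x y.
Proof.
  rewrite gp_dstar, <- (gp'_congr _ _ _ (dprime_rep_class x)), gp'_sym,
    <- (gp'_congr _ _ _ (dprime_rep_class y)). apply gp'_sym.
Qed.

Lemma gp_dstar_sym (P Q : TX d x0) :
  gp (@dstar X d x0) (TX_class d x0 x0) P Q = gp (@dstar X d x0) (TX_class d x0 x0) Q P.
Proof. rewrite !gp_dstar. apply gp'_sym. Qed.

Lemma gp_dstar_ultra (P Q S : TX d x0) :
  Rmin (gp (@dstar X d x0) (TX_class d x0 x0) P Q) (gp (@dstar X d x0) (TX_class d x0 x0) Q S)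
  <= gp (@dstar X d x0) (TX_class d x0 x0) P S.
Proof. rewrite !gp_dstar. apply gp'_ultra. Qed.

Lemma gp_dstar_nonneg (P Q : TX d x0) : 0 <= gp (@dstar X d x0) (TX_class d x0 x0) P Q.
Proof. rewrite gp_dstar. apply gp'_nonneg. Qed.

End EndApproximatingTree.

Lemma quasi_tree_gp'_bounded {X : Type} {d : X -> X -> R} (x0 : X) :
  quasi_tree d -> exists D, 0 <= D /\ forall x y, gp' d x0 x y <= gp d x0 x y + D.
Proof.
  intros [Hm [Hgeo [V [E [HT [f [K [C [HK [HC [HQI _]]]]]]]]]]].
  exists (3 * Delta K C). split; [pose proof (Delta_nonneg K C HK HC); lra|].
  intros x y. apply (gp'_le Hm). intros l.
  apply (chain_min_le_gp Hm Hgeo HT f K C HK HC HQI).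
Qed.

Section Boundary.
Context {Y : Type} {dY : Y -> Y -> R} {y0 : Y}.

Notation g := (gp dY y0).
Notation equiv := (seq_equiv dY y0).

Lemma seq_equiv_diverges x y : equiv x y <-> diverges2 (fun i j => g (x i) (y j)).
Proof. apply dliminf_pinfty. Qed.

Lemma seq_equiv_refl x : conv_inf dY y0 x -> equiv x x.
Proof. intros Hx. apply seq_equiv_diverges. exact Hx. Qed.

Definition bnd_class (x : nat -> Y) (Hx : conv_inf dY y0 x) : bnd dY y0 :=
  exist _ (fun y => conv_inf dY y0 y /\ equiv x y) (ex_intro _ x (conj Hx eq_refl)).

Lemma bnd_class_mem x (Hx : conv_inf dY y0 x) : proj1_sig (bnd_class x Hx) x.
Proof. split; auto. apply seq_equiv_refl; auto. Qed.

Lemma bnd_ext (p q : bnd dY y0) : (forall z, proj1_sig p z <-> proj1_sig q z) -> p = q.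
Proof.
  intros H. destruct p as [P HP], q as [Q HQ]. simpl in H.
  assert (P = Q) by (apply functional_extensionality; intros z; apply propositional_extensionality; auto).
  subst Q. f_equal. apply proof_irrelevance.
Qed.

Lemma bnd_witness (p : bnd dY y0) :
  exists x, proj1_sig p x /\ forall y, proj1_sig p y <-> conv_inf dY y0 y /\ equiv x y.
Proof.
  destruct p as [P [x [Hx ->]]]. simpl. exists x. split; [|tauto].
  split; auto. apply seq_equiv_refl; auto.
Qed.

Lemma bnd_nonempty (p : bnd dY y0) : exists x, proj1_sig p x.
Proof. destruct (bnd_witness p) as [x [Hx _]]. eauto. Qed.

Lemma bnd_mem_conv (p : bnd dY y0) x : proj1_sig p x -> conv_inf dY y0 x.
Proof. destruct (bnd_witness p) as [w [_ Hw]]. intros Hx. apply Hw, Hx. Qed.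

Lemma bgp_ge (p q : bnd dY y0) x y : proj1_sig p x -> proj1_sig q y ->
  Rbar_le (dliminf (fun i j => g (x i) (y j))) (bgp p q).
Proof. intros Hx Hy. apply Rbar_lub_ub. exists x, y. auto. Qed.

Lemma bgp_ge_eventually (p q : bnd dY y0) x y N (M : R) :
  proj1_sig p x -> proj1_sig q y ->
  (forall i j, (N <= i)%nat -> (N <= j)%nat -> M <= g (x i) (y j)) -> Rbar_le M (bgp p q).
Proof.
  intros Hx Hy HM. eapply Rbar_le_trans; [| apply (bgp_ge p q x y Hx Hy)].
  apply (dliminf_ge _ N). auto.
Qed.

Lemma bgp_gt (p q : bnd dY y0) (M : R) : Rbar_lt M (bgp p q) ->
  exists x y, proj1_sig p x /\ proj1_sig q y /\
    exists N, forall i j, (N <= i)%nat -> (N <= j)%nat -> M <= g (x i) (y j).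
Proof.
  intros H. apply Rbar_lub_gt in H as [t [(x & y & Hx & Hy & ->) Ht]].
  apply dliminf_gt in Ht. exists x, y. auto.
Qed.

Lemma bgp_nonneg (p q : bnd dY y0) : (forall a b, 0 <= g a b) -> Rbar_le 0 (bgp p q).
Proof.
  intros Hnn. destruct (bnd_nonempty p) as [x Hx]. destruct (bnd_nonempty q) as [y Hy].
  apply (bgp_ge_eventually p q x y 0); auto.
Qed.

Lemma bgp_self (p : bnd dY y0) : bgp p p = p_infty.
Proof.
  destruct (bnd_nonempty p) as [x Hx]. pose proof (bgp_ge p p x x Hx Hx) as H.
  rewrite (proj2 (dliminf_pinfty _) (bnd_mem_conv p x Hx)) in H.
  destruct (bgp p p); simpl in H; tauto.
Qed.

Section Equivalence.
Hypothesis equiv_sym : forall x y, equiv x y -> equiv y x.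
Hypothesis equiv_trans : forall x y z, equiv x y -> equiv y z -> equiv x z.

Lemma bnd_mem_equiv (p : bnd dY y0) x y : proj1_sig p x -> proj1_sig p y -> equiv x y.
Proof.
  destruct (bnd_witness p) as [w [_ Hw]]. intros Hx Hy.
  apply Hw in Hx as [_ Hx]. apply Hw in Hy as [_ Hy]. eauto.
Qed.

Lemma bnd_mem_of_equiv (p : bnd dY y0) x y :
  proj1_sig p x -> conv_inf dY y0 y -> equiv x y -> proj1_sig p y.
Proof.
  destruct (bnd_witness p) as [w [_ Hw]]. intros Hx Hy Hxy.
  apply Hw in Hx as [_ Hx]. apply Hw. eauto.
Qed.

Lemma bnd_eq (p q : bnd dY y0) x y :
  proj1_sig p x -> proj1_sig q y -> equiv x y -> p = q.
Proof.
  intros Hx Hy Hxy. apply bnd_ext. intros z. split; intros Hz.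
  - apply (bnd_mem_of_equiv q y); [auto | apply (bnd_mem_conv p z Hz)|].
    apply (equiv_trans _ x); auto. apply (bnd_mem_equiv p); auto.
  - apply (bnd_mem_of_equiv p x); [auto | apply (bnd_mem_conv q z Hz)|].
    apply (equiv_trans _ y); auto. apply (bnd_mem_equiv q); auto.
Qed.

End Equivalence.

Section Ultrametric.
Hypothesis g_sym : forall a b, g a b = g b a.
Hypothesis g_ultra : forall a b c, Rmin (g a b) (g b c) <= g a c.

Lemma gp_ge_through a b c M : M <= g a b -> M <= g b c -> M <= g a c.
Proof. intros H1 H2. pose proof (g_ultra a b c). unfold Rmin in H. destruct (Rle_dec _ _); lra. Qed.

Lemma ultra_equiv_sym x y : equiv x y -> equiv y x.
Proof.
  rewrite !seq_equiv_diverges. intros H M. destruct (H M) as [N HN].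
  exists N. intros i j Hi Hj. rewrite g_sym. auto.
Qed.

Lemma ultra_equiv_trans x y z : equiv x y -> equiv y z -> equiv x z.
Proof.
  rewrite !seq_equiv_diverges. intros H1 H2 M.
  destruct (H1 M) as [N1 HN1]. destruct (H2 M) as [N2 HN2].
  exists (max N1 N2). intros i j Hi Hj. apply (gp_ge_through _ (y (max N1 N2))).
  - apply HN1; lia.
  - apply HN2; lia.
Qed.

Lemma bgp_sym (p q : bnd dY y0) : bgp p q = bgp q p.
Proof.
  assert (Hle : forall p q : bnd dY y0, Rbar_le (bgp p q) (bgp q p)).
  { intros p' q'. apply Rbar_le_from_below. intros M HM.
    destruct (bgp_gt p' q' M HM) as (x & y & Hx & Hy & N & HN).
    apply (bgp_ge_eventually q' p' y x N); auto.
    intros i j Hi Hj. rewrite g_sym. auto. }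
  apply Rbar_le_antisym; apply Hle.
Qed.

Lemma bgp_pinfty_eq (p q : bnd dY y0) : bgp p q = p_infty -> p = q.
Proof.
  intros H. destruct (bnd_nonempty p) as [x Hx]. destruct (bnd_nonempty q) as [y Hy].
  apply (bnd_eq ultra_equiv_sym ultra_equiv_trans p q x y Hx Hy).
  apply seq_equiv_diverges. intros M.
  destruct (bgp_gt p q M) as (x' & y' & Hx' & Hy' & N0 & HN0); [rewrite H; simpl; auto|].
  pose proof (bnd_mem_equiv ultra_equiv_sym ultra_equiv_trans p x x' Hx Hx') as Hxx'.
  pose proof (bnd_mem_equiv ultra_equiv_sym ultra_equiv_trans q y' y Hy' Hy) as Hyy'.
  apply seq_equiv_diverges in Hxx', Hyy'.
  destruct (Hxx' M) as [N1 HN1]. destruct (Hyy' M) as [N2 HN2].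
  set (k := max N0 (max N1 N2)). exists k. intros i j Hi Hj.
  apply (gp_ge_through _ (x' k)); [apply HN1; lia|].
  apply (gp_ge_through _ (y' k)); [apply HN0; lia | apply HN2; lia].
Qed.

Lemma bgp_ultra (p q r : bnd dY y0) : Rbar_le (Rbar_min (bgp p q) (bgp q r)) (bgp p r).
Proof.
  apply Rbar_le_from_below. intros M HM.
  assert (H1 : Rbar_lt M (bgp p q)) by (eapply Rbar_lt_le_trans; [exact HM | apply Rbar_min_l]).
  assert (H2 : Rbar_lt M (bgp q r)) by (eapply Rbar_lt_le_trans; [exact HM | apply Rbar_min_r]).
  destruct (bgp_gt p q M H1) as (x & y & Hx & Hy & N1 & HN1).
  destruct (bgp_gt q r M H2) as (y' & z & Hy' & Hz & N2 & HN2).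
  pose proof (bnd_mem_equiv ultra_equiv_sym ultra_equiv_trans q y y' Hy Hy') as Hyy'.
  apply seq_equiv_diverges in Hyy'. destruct (Hyy' M) as [N3 HN3].
  set (k := max N1 (max N2 N3)).
  apply (bgp_ge_eventually p r x z k); auto. intros i j Hi Hj.
  apply (gp_ge_through _ (y k)); [apply HN1; lia|].
  apply (gp_ge_through _ (y' k)); [apply HN3; lia | apply HN2; lia].
Qed.

End Ultrametric.
End Boundary.

Section Comparison.
Context {Y Z : Type} {dY : Y -> Y -> R} {y0 : Y} {dZ : Z -> Z -> R} {z0 : Z}.
Variables (phi : Y -> Z) (rep : Z -> Y) (D : R).
Hypothesis gpZ_sym : forall a b, gp dZ z0 a b = gp dZ z0 b a.
Hypothesis gpZ_ultra : forall a b c, Rmin (gp dZ z0 a b) (gp dZ z0 b c) <= gp dZ z0 a c.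
Hypothesis gp_map_ge : forall a b, gp dY y0 a b <= gp dZ z0 (phi a) (phi b).
Hypothesis gp_map_le : forall a b, gp dZ z0 (phi a) (phi b) <= gp dY y0 a b + D.
Hypothesis map_rep : forall P, phi (rep P) = P.

Notation mapseq x := (fun n => phi (x n)).
Notation repseq u := (fun n => rep (u n)).

Lemma gp_map_rep_le a P : gp dZ z0 (phi a) P <= gp dY y0 a (rep P) + D.
Proof. rewrite <- (map_rep P) at 1. apply gp_map_le. Qed.

Lemma gp_rep_le P Q : gp dZ z0 P Q <= gp dY y0 (rep P) (rep Q) + D.
Proof. rewrite <- (map_rep P) at 1. apply gp_map_rep_le. Qed.

Lemma conv_inf_map x : conv_inf dY y0 x -> conv_inf dZ z0 (mapseq x).
Proof.
  intros H. apply (diverges2_shift _ _ 0 H). intros i j. rewrite Rplus_0_r. apply gp_map_ge.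
Qed.

Lemma conv_inf_rep u : conv_inf dZ z0 u -> conv_inf dY y0 (repseq u).
Proof. intros H. apply (diverges2_shift _ _ D H). intros i j. apply gp_rep_le. Qed.

Lemma seq_equiv_map x y : seq_equiv dY y0 x y <-> seq_equiv dZ z0 (mapseq x) (mapseq y).
Proof.
  rewrite !seq_equiv_diverges. split; intros H.
  - apply (diverges2_shift _ _ 0 H). intros i j. rewrite Rplus_0_r. apply gp_map_ge.
  - apply (diverges2_shift _ _ D H). intros i j. apply gp_map_le.
Qed.

Lemma seq_equiv_map_rep x u :
  seq_equiv dZ z0 (mapseq x) u -> seq_equiv dY y0 x (repseq u).
Proof.
  rewrite !seq_equiv_diverges. intros H.
  apply (diverges2_shift _ _ D H). intros i j. apply gp_map_rep_le.
Qed.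

Lemma src_equiv_sym x y : seq_equiv dY y0 x y -> seq_equiv dY y0 y x.
Proof. rewrite !seq_equiv_map. apply ultra_equiv_sym; auto. Qed.

Lemma src_equiv_trans x y z :
  seq_equiv dY y0 x y -> seq_equiv dY y0 y z -> seq_equiv dY y0 x z.
Proof. rewrite !seq_equiv_map. apply ultra_equiv_trans; auto. Qed.

Lemma bnd_map_point (p : bnd dY y0) :
  exists P : bnd dZ z0, forall x, proj1_sig p x -> proj1_sig P (mapseq x).
Proof.
  destruct (bnd_nonempty p) as [w Hw].
  exists (bnd_class (mapseq w) (conv_inf_map w (bnd_mem_conv p w Hw))).
  intros x Hx. split.
  - apply conv_inf_map, (bnd_mem_conv p x Hx).
  - apply seq_equiv_map, (bnd_mem_equiv src_equiv_sym src_equiv_trans p); auto.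
Qed.

Section Map.
Variable F : bnd dY y0 -> bnd dZ z0.
Hypothesis F_mem : forall p x, proj1_sig p x -> proj1_sig (F p) (mapseq x).

Lemma bnd_map_inj p1 p2 : F p1 = F p2 -> p1 = p2.
Proof.
  intros Heq. destruct (bnd_nonempty p1) as [x1 H1]. destruct (bnd_nonempty p2) as [x2 H2].
  apply (bnd_eq src_equiv_sym src_equiv_trans p1 p2 x1 x2 H1 H2), seq_equiv_map.
  apply (bnd_mem_equiv (ultra_equiv_sym gpZ_sym) (ultra_equiv_trans gpZ_ultra) (F p2)).
  - rewrite <- Heq. auto.
  - auto.
Qed.

Lemma bnd_map_rep_mem p u : proj1_sig (F p) u -> proj1_sig p (repseq u).
Proof.
  intros Hu. destruct (bnd_nonempty p) as [w Hw].
  apply (bnd_mem_of_equiv src_equiv_sym src_equiv_trans p w); auto.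
  - apply conv_inf_rep, (bnd_mem_conv (F p) u Hu).
  - apply seq_equiv_map_rep.
    apply (bnd_mem_equiv (ultra_equiv_sym gpZ_sym) (ultra_equiv_trans gpZ_ultra) (F p)); auto.
Qed.

Lemma bnd_map_surj Q : exists p, F p = Q.
Proof.
  destruct (bnd_nonempty Q) as [u Hu].
  set (p := bnd_class (repseq u) (conv_inf_rep u (bnd_mem_conv Q u Hu))).
  exists p.
  pose proof (F_mem p _ (bnd_class_mem _ _)) as Hp.
  assert (Hmaprep : (fun n => phi (rep (u n))) = u).
  { apply functional_extensionality. intros n. apply map_rep. }
  cbv beta in Hp. rewrite Hmaprep in Hp.
  apply (bnd_eq (ultra_equiv_sym gpZ_sym) (ultra_equiv_trans gpZ_ultra) _ Q u u Hp Hu).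
  apply seq_equiv_refl, (bnd_mem_conv Q u Hu).
Qed.

Lemma bgp_map_ge (p q : bnd dY y0) : Rbar_le (bgp p q) (bgp (F p) (F q)).
Proof.
  apply Rbar_le_from_below. intros M HM.
  destruct (bgp_gt p q M HM) as (x & y & Hx & Hy & N & HN).
  apply (bgp_ge_eventually (F p) (F q) (mapseq x) (mapseq y) N); auto. intros i j Hi Hj.
  pose proof (HN i j Hi Hj). pose proof (gp_map_ge (x i) (y j)). lra.
Qed.

Lemma bgp_map_le (p q : bnd dY y0) (M : R) :
  Rbar_lt M (bgp (F p) (F q)) -> Rbar_le (M - D) (bgp p q).
Proof.
  intros HM. destruct (bgp_gt (F p) (F q) M HM) as (u & v & Hu & Hv & N & HN).
  apply (bgp_ge_eventually p q _ _ N _ (bnd_map_rep_mem p u Hu) (bnd_map_rep_mem q v Hv)).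
  intros i j Hi Hj. pose proof (HN i j Hi Hj). pose proof (gp_rep_le (u i) (v j)). lra.
Qed.

End Map.

Theorem boundary_comparison :
  exists F : bnd dY y0 -> bnd dZ z0,
    (forall p1 p2, F p1 = F p2 -> p1 = p2) /\ (forall Q, exists p, F p = Q) /\
    forall p q, Rbar_le (bgp p q) (bgp (F p) (F q)) /\
      forall M : R, Rbar_lt M (bgp (F p) (F q)) -> Rbar_le (M - D) (bgp p q).
Proof.
  exists (fun p => proj1_sig (constructive_indefinite_description _ (bnd_map_point p))).
  set (F := fun p => proj1_sig (constructive_indefinite_description _ (bnd_map_point p))).
  assert (F_mem : forall p x, proj1_sig p x -> proj1_sig (F p) (mapseq x)).
  { intros p. unfold F. destruct (constructive_indefinite_description _ _). auto. }
  split; [|split].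
  - apply (bnd_map_inj F F_mem).
  - apply (bnd_map_surj F F_mem).
  - intros p q. split; [apply (bgp_map_ge F F_mem) | apply (bgp_map_le F F_mem)].
Qed.

End Comparison.

Lemma vis_nonneg a t : 0 <= vis a t.
Proof. destruct t; simpl; try lra. left; apply exp_pos. Qed.

Lemma vis_eq0 a t : Rbar_le 0 t -> vis a t = 0 -> t = p_infty.
Proof.
  intros H0 H. destruct t as [r| |]; simpl in *; auto; [|contradiction].
  pose proof (exp_pos (- r * ln a)). unfold Rpower in H. lra.
Qed.

Lemma vis_antimono a s t : 1 < a -> Rbar_le 0 s -> Rbar_le s t -> vis a t <= vis a s.
Proof.
  intros Ha H0 H. destruct s as [r| |]; destruct t as [u| |]; simpl in *;
    try contradiction; try lra.
  - apply Rle_Rpower; lra.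
  - left; apply exp_pos.
Qed.

Lemma vis_comparable a D bX bT :
  1 < a -> 0 <= D -> Rbar_le 0 bX -> Rbar_le bX bT ->
  (forall M : R, Rbar_lt M bT -> Rbar_le (M - D) bX) ->
  / Rpower a D * vis a bX <= vis a bT /\ vis a bT <= Rpower a D * vis a bX.
Proof.
  intros Ha HD H0 H1 H2.
  assert (HaD : 1 <= Rpower a D) by (rewrite <- (Rpower_O a) by lra; apply Rle_Rpower; lra).
  split.
  - destruct bX as [r| |]; destruct bT as [s| |]; simpl in *; try contradiction; try lra.
    + assert (Hs : Rbar_le s (r + D)).
      { apply Rbar_le_from_below. intros M HM. simpl. pose proof (H2 M HM). lra. }
      simpl in Hs.
      rewrite <- Rpower_Ropp, <- Rpower_plus. apply Rle_Rpower; lra.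
    + specialize (H2 (r + D + 1) I). simpl in H2. lra.
  - pose proof (vis_antimono a bX bT Ha H0 H1). pose proof (vis_nonneg a bX). nra.
Qed.

Section VisualUltrametric.
Context {B : Type} (b : B -> B -> Rbar) (a : R).
Hypothesis Ha : 1 < a.
Hypothesis b_nonneg : forall p q, Rbar_le 0 (b p q).
Hypothesis b_sym : forall p q, b p q = b q p.
Hypothesis b_self : forall p, b p p = p_infty.
Hypothesis b_pinfty_eq : forall p q, b p q = p_infty -> p = q.
Hypothesis b_ultra : forall p q r, Rbar_le (Rbar_min (b p q) (b q r)) (b p r).

(* [a^-(.)] turns the ultrametric inequality for [b] into the triangle inequality. *)
Lemma vis_is_metric : is_metric (fun p q => vis a (b p q)).
Proof.
  split; [intros; apply vis_nonneg|]. split; [|split].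
  - intros p q. split.
    + intros H. apply b_pinfty_eq, (vis_eq0 a); auto.
    + intros ->. rewrite b_self. reflexivity.
  - intros p q. rewrite b_sym. reflexivity.
  - intros p q r. pose proof (vis_nonneg a (b p q)). pose proof (vis_nonneg a (b q r)).
    assert (Hmin : vis a (Rbar_min (b p q) (b q r)) <= vis a (b p q) + vis a (b q r)).
    { apply Rbar_min_case; lra. }
    pose proof (vis_antimono a _ _ Ha (Rbar_min_case _ _ (Rbar_le 0) (b_nonneg p q) (b_nonneg q r))
                  (b_ultra p q r)).
    lra.
Qed.

End VisualUltrametric.

Lemma is_metric_pullback {A B : Type} (dB : B -> B -> R) (F : A -> B) :
  is_metric dB -> (forall p1 p2, F p1 = F p2 -> p1 = p2) -> is_metric (fun p q => dB (F p) (F q)).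
Proof.
  intros [Hnn [Hzero [Hsym Htri]]] Hinj. split; [|split; [|split]]; auto.
  intros p q. split; intros H.
  - apply Hinj, Hzero, H.
  - subst. apply Hzero. reflexivity.
Qed.

Theorem visual_metric_pullback {Y Z : Type} {dY : Y -> Y -> R} {y0 : Y}
    {dZ : Z -> Z -> R} {z0 : Z} (a D : R) (F : bnd dY y0 -> bnd dZ z0) :
  1 < a -> 0 <= D ->
  (forall x y, 0 <= gp dY y0 x y) -> (forall P Q, 0 <= gp dZ z0 P Q) ->
  (forall P Q, gp dZ z0 P Q = gp dZ z0 Q P) ->
  (forall P Q S, Rmin (gp dZ z0 P Q) (gp dZ z0 Q S) <= gp dZ z0 P S) ->
  (forall p1 p2, F p1 = F p2 -> p1 = p2) ->
  (forall p q, Rbar_le (bgp p q) (bgp (F p) (F q)) /\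
     forall M : R, Rbar_lt M (bgp (F p) (F q)) -> Rbar_le (M - D) (bgp p q)) ->
  visual_metric a (fun p q => vis a (bgp (F p) (F q))).
Proof.
  intros Ha HD HYnn HZnn HZsym HZultra Finj Fbd. split.
  - apply (is_metric_pullback (fun P Q => vis a (bgp P Q))); auto.
    apply vis_is_metric; auto.
    + intros P Q. apply bgp_nonneg; auto.
    + apply bgp_sym; auto.
    + apply bgp_self.
    + apply bgp_pinfty_eq; auto.
    + apply bgp_ultra; auto.
  - exists (Rpower a D). split.
    + rewrite <- (Rpower_O a) by lra. apply Rle_Rpower; lra.
    + intros p q. destruct (Fbd p q) as [Hge Hle].
      apply vis_comparable; auto. apply bgp_nonneg; auto.
Qed.

Theorem corollary6p36 (X : Type) (d : X -> X -> R) (x0 : X)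
    (Hqt : quasi_tree d) (a : R) (Ha : 1 < a) :
  exists dB : bnd d x0 -> bnd d x0 -> R,
    visual_metric a dB /\
    exists f : bnd d x0 -> bnd (@dstar X d x0) (TX_class d x0 x0),
      (forall p1 p2, f p1 = f p2 -> p1 = p2) /\
      (forall q, exists p, f p = q) /\
      (forall p1 p2, @dbTX X d x0 a (f p1) (f p2) = dB p1 p2).
Proof.
  pose proof Hqt as [Hm _].
  destruct (quasi_tree_gp'_bounded x0 Hqt) as [D [HD Hbound]].
  destruct (boundary_comparison (dY := d) (y0 := x0) (TX_class d x0) (@TX_rep X d x0) D (gp_dstar_sym Hm x0)
              (gp_dstar_ultra Hm x0)) as [F [Finj [Fsurj Fbd]]].
  - intros x y. rewrite (gp_dstar_class Hm). apply (gp'_ge_gp Hm).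
  - intros x y. rewrite (gp_dstar_class Hm). apply Hbound.
  - apply TX_class_rep.
  - exists (fun p q => dbTX a (F p) (F q)). split.
    + apply (visual_metric_pullback a D F); auto.
      * apply (gp_nonneg Hm).
      * apply (gp_dstar_nonneg Hm).
      * apply (gp_dstar_sym Hm).
      * apply (gp_dstar_ultra Hm).
    + exists F. auto.
Qed.
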